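(* Let $E$ be a nonzero real Banach space and $f\colon E\to\,]{-}\infty,\infty]$ be proper, convex and lower semicontinuous. Then $(\partial f)^{\mathbb F}=\partial(f^* )$, i.e. for all $(y^*,y^{**})\in E^*\times E^{**}$, $(y^*,y^{**})\in G((\partial f)^{\mathbb F})$ if and only if $f^*(y^* )+f^{**}(y^{**})=\langle y^*,y^{**}\rangle$.
   Context: $E^*$, $E^{**}$ are the dual and bidual, with pairings $\langle x,x^*\rangle$ and $\langle x^*,x^{**}\rangle$. $f^*(x^* )=\sup_{x\in E}[\langle x,x^*\rangle-f(x)]$, $f^{**}(x^{**})=\sup_{x^*\in E^*}[\langle x^*,x^{**}\rangle-f^*(x^* )]$; $x^*\in\partial f(x)$ iff $f(x)+f^*(x^* )=\langle x,x^*\rangle$. (The multifunction $\partial f$ is closed, monotone and quasidense, so its Fitzpatrick extension is defined.) For a multifunction $S\colon E\rightrightarrows E^*$ with nonempty graph $G(S)$: closed means $G(S)$ norm-closed; monotone means $\langle s-t,s^*-t^*\rangle\ge0$ on $G(S)$; quasidense means for every $(x,x^* )\in E\times E^*$, $\inf_{(s,s^* )\in G(S)}[\tfrac12\|s-x\|^2+\tfrac12\|s^*-x^*\|^2+\langle s-x,s^*-x^*\rangle]\le0$. Define $\varphi_S(x,x^* )=\sup_{(s,s^* )\in G(S)}[\langle s,x^*\rangle+\langle x,s^*\rangle-\langle s,s^*\rangle]$ on $E\times E^*$; identify $(E\times E^* )^*$ with $E^*\times E^{**}$ via $\langle (x,x^* ),(y^*,y^{**})\rangle=\langle x,y^*\rangle+\langle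 x^*,y^{**}\rangle$, and let $\varphi_S^*$ be the conjugate on $E^*\times E^{**}$. For $S$ closed, monotone and quasidense, one has $\varphi_S^*(y^*,y^{**})\ge\langle y^*,y^{**}\rangle$ everywhere, and the Fitzpatrick extension $S^{\mathbb F}\colon E^*\rightrightarrows E^{**}$ is defined by $(y^*,y^{**})\in G(S^{\mathbb F})$ iff $\varphi_S^*(y^*,y^{**})=\langle y^*,y^{**}\rangle$. *)

From mathcomp Require Import all_boot all_order all_algebra.
From mathcomp Require Import all_classical all_reals all_analysis.
Set Implicit Arguments. Unset Strict Implicit. Unset Printing Implicit Defensive.
Import Order.TTheory GRing.Theory Num.Theory.
Import numFieldNormedType.Exports.
Local Open Scope classical_set_scope.
Local Open Scope ring_scope.

Section Defs.
Context {R : realType} {E : normedModType R}.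

(* E^* : continuous (= bounded) linear functionals on E, represented as
   functions E -> R satisfying the predicate [is_dual]. *)
Definition is_dual (xs : E -> R) : Prop :=
  (forall (a : R) (x y : E), xs (a *: x + y) = a * xs x + xs y) /\
  exists M : R, forall x : E, `|xs x| <= M * `|x|.

(* E^** : bounded linear functionals on E^*, represented as functions
   (E -> R) -> R; only their values on elements of E^* matter.
   Boundedness = bounded on the unit ball of E^* (dual norm <= 1). *)
Definition is_bidual (xss : (E -> R) -> R) : Prop :=
  (forall (a : R) (xs ys : E -> R), is_dual xs -> is_dual ys ->
     xss (fun x => a * xs x + ys x) = a * xss xs + xss ys) /\
  exists M : R, forall xs : E -> R, is_dual xs ->
     (forall x : E, `|xs x| <= `|x|) -> `|xss xs| <= M.

Local Open Scope ereal_scope.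

Definition proper_fun (f : E -> \bar R) : Prop :=
  (forall x, f x != -oo) /\ exists x, f x != +oo.

Definition convex_efun (f : E -> \bar R) : Prop :=
  forall (x y : E) (t : R), (0 <= t <= 1)%R ->
    f (t *: x + (1 - t) *: y)%R <= t%:E * f x + (1 - t)%:E * f y.

Definition fconj (f : E -> \bar R) (xs : E -> R) : \bar R :=
  ereal_sup [set (xs x)%:E - f x | x in [set: E]].

Definition fbiconj (f : E -> \bar R) (xss : (E -> R) -> R) : \bar R :=
  ereal_sup [set (xss xs)%:E - fconj f xs | xs in is_dual].

Definition subdiff_graph (f : E -> \bar R) (x : E) (xs : E -> R) : Prop :=
  is_dual xs /\ f x + fconj f xs = (xs x)%:E.

Definition fitz (G : E -> (E -> R) -> Prop) (x : E) (xs : E -> R) : \bar R :=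
  ereal_sup [set (ss.2 x + xs ss.1 - ss.2 ss.1)%R%:E |
               ss in [set ss : E * (E -> R) | G ss.1 ss.2]].

Definition fitz_conj (G : E -> (E -> R) -> Prop) (ys : E -> R)
    (yss : (E -> R) -> R) : \bar R :=
  ereal_sup [set (ys p.1 + yss p.2)%R%:E - fitz G p.1 p.2 |
               p in [set p : E * (E -> R) | is_dual p.2]].

Definition fitz_ext_graph (G : E -> (E -> R) -> Prop) (ys : E -> R)
    (yss : (E -> R) -> R) : Prop :=
  fitz_conj G ys yss = (yss ys)%:E.

End Defs.

(* By Fenchel-Young, if [f x] and [f^* xs] are finite then the Fitzpatrick function of
   the subdifferential at [(x, xs)] is at most [f x + f^* xs], so its conjugate at
   [(ys, yss)] is at least [f^* ys + f^** yss]; it is [+oo] when the graph is empty. This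
   gives the forward direction, and one inequality of the converse.
   Conversely, assume [f^* ys + f^** yss = yss ys]. It remains to find, for every
   [(x, xs)] and [eps > 0], a point [(s, ss)] of the graph with
   [ss x + xs s - ss s >= ys x + yss xs - yss ys - eps]. This is a Brondsted-Rockafellar
   argument: on a halfspace [(ys - xs) (y - x) <= beta], on which the hypothesis leaves
   no duality gap, take a near-maximizer of [ys - f] (a Lagrange multiplier argument),
   apply Ekeland's variational principle to [f - ys] restricted to the halfspace, obtain a
   subgradient of small norm of the penalized function by Hahn-Banach, and remove the
   constraint with a second multiplier. *)

From mathcomp Require Import all_boot all_order all_algebra.
From mathcomp Require Import all_classical all_reals all_analysis.
From mathcomp Require Import ring lra.
Import Order.TTheory GRing.Theory Num.Theory.
Import numFieldNormedType.Exports.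
Local Open Scope classical_set_scope.
Local Open Scope ring_scope.

(** * Hahn-Banach *)

Section sublinear.
Context {R : realType} {E : lmodType R}.
Implicit Types (L p q : E -> R) (x y : E).

Lemma scalarD {L} : scalar L -> {morph L : x y / x + y}.
Proof. by move=> hL x y; have := hL 1 x y; rewrite scale1r mul1r. Qed.

Lemma scalarN {L} : scalar L -> {morph L : x / - x}.
Proof. by move=> hL x; rewrite -scaleN1r (scalable_linear hL) /= mulN1r. Qed.

Definition sublinear q :=
  (forall x y, q (x + y) <= q x + q y) /\
  (forall c x, 0 < c -> q (c *: x) <= c * q x).

Lemma sublinear0 q : sublinear q -> q 0 = 0.
Proof.
move=> [qD qZ]; apply/eqP; rewrite eq_le; apply/andP; split.
  by have := qZ 2^-1 0 (ltac:(by rewrite invr_gt0)); rewrite scaler0 => h; lra.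
by have := qD 0 0; rewrite addr0 => h; lra.
Qed.

Lemma sublinearZ q c x : sublinear q -> 0 <= c -> q (c *: x) = c * q x.
Proof.
move=> hq; rewrite le_eqVlt => /orP[/eqP <-|c0].
  by rewrite scale0r mul0r sublinear0.
apply/eqP; rewrite eq_le hq.2 //=.
have := hq.2 c^-1 (c *: x); rewrite invr_gt0 => /(_ c0).
by rewrite scalerA mulVf ?gt_eqF // scale1r -ler_pdivrMl ?invr_gt0 // invrK.
Qed.

Lemma sublinear_oppN_le {q} x : sublinear q -> - q (- x) <= q x.
Proof. by move=> hq; have := hq.1 x (- x); rewrite subrr sublinear0 // => h; lra. Qed.

Lemma sublinear_inf_chain {A : set (E -> R)} {p} : A !=set0 ->
  (forall q1 q2, A q1 -> A q2 -> (forall x, q1 x <= q2 x) \/ (forall x, q2 x <= q1 x)) ->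
  (forall q, A q -> sublinear q /\ forall x, q x <= p x) ->
  let g x := inf [set q x | q in A] in
  sublinear g /\ forall q, A q -> forall x, g x <= q x.
Proof.
move=> [q0 Aq0] Achain Asub g.
have gne x : [set q x | q in A] !=set0 by exists (q0 x), q0.
have glb x : has_lbound [set q x | q in A].
  exists (- p (- x)) => _ [q Aq <-]; have [qs qp] := Asub q Aq.
  by apply: le_trans _ (sublinear_oppN_le x qs); rewrite lerN2.
have gle q x : A q -> g x <= q x by move=> Aq; apply: (ge_inf (glb x)); exists q.
split; last by move=> q Aq x; apply: gle.
split.
- move=> x y; rewrite -lerBlDr; apply: lb_le_inf (gne x) _ => _ [q1 Aq1 <-].
  rewrite lerBlDr -lerBlDl; apply: lb_le_inf (gne y) _ => _ [q2 Aq2 <-].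
  rewrite lerBlDr.
  have [q12|q21] := Achain q1 q2 Aq1 Aq2.
  + apply: le_trans (gle _ _ Aq1) _; apply: le_trans ((Asub _ Aq1).1.1 x y) _.
    by have := q12 y; lra.
  + apply: le_trans (gle _ _ Aq2) _; apply: le_trans ((Asub _ Aq2).1.1 x y) _.
    by have := q21 x; lra.
- move=> c x c0; rewrite mulrC -ler_pdivrMr //.
  apply: lb_le_inf (gne x) _ => _ [q Aq <-].
  rewrite ler_pdivrMr // mulrC; apply: le_trans (gle _ _ Aq) _.
  exact: (Asub _ Aq).1.2.
Qed.

(* Minimality is tested against [q' x = inf_(t >= 0) q (x + t y) - t q y], a sublinear
   minorant of [q] with [q' (- y) <= - q y]. *)
Lemma minimal_sublinear_odd q :
  sublinear q -> (forall q', sublinear q' -> (forall x, q' x <= q x) -> forall x, q x <= q' x) ->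
  forall y, q (- y) = - q y.
Proof.
move=> qs qmin y.
pose S x := [set q (x + t *: y) - t * q y | t in [set t : R | 0 <= t]].
pose q' x := inf (S x).
have Sne x : S x !=set0 by exists (q (x + 0 *: y) - 0 * q y), 0; rewrite /= ?lexx.
have Slb x : has_lbound (S x).
  exists (- q (- x)) => _ [t t0 <-].
  have := qs.1 (x + t *: y) (- x); rewrite [_ + - x]addrC addKr sublinearZ // => h; lra.
have q'le x t : 0 <= t -> q' x <= q (x + t *: y) - t * q y.
  by move=> t0; apply: (ge_inf (Slb x)); exists t.
have q'q x : q' x <= q x.
  by apply: le_trans (q'le x 0 (lexx _)) _; rewrite scale0r addr0 mul0r subr0.
have q's : sublinear q'.
  split.
  - move=> x1 x2; rewrite -lerBlDr; apply: lb_le_inf (Sne x1) _ => _ [t1 t10 <-].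
    rewrite lerBlDr -lerBlDl; apply: lb_le_inf (Sne x2) _ => _ [t2 t20 <-].
    rewrite lerBlDr; apply: le_trans (q'le _ (t1 + t2) (addr_ge0 t10 t20)) _.
    have := qs.1 (x1 + t1 *: y) (x2 + t2 *: y).
    by rewrite addrACA -scalerDl mulrDl => h; lra.
  - move=> c x c0; rewrite mulrC -ler_pdivrMr //.
    apply: lb_le_inf (Sne x) _ => _ [t t0 <-].
    rewrite ler_pdivrMr // mulrC.
    apply: le_trans (q'le _ (c * t) (mulr_ge0 (ltW c0) t0)) _.
    by rewrite -scalerA -scalerDr sublinearZ ?(ltW c0) // mulrBr mulrA.
have := le_trans (qmin q' q's q'q (- y)) (q'le (- y) 1 ler01).
rewrite scale1r addNr sublinear0 // mul1r sub0r => h.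
by have := sublinear_oppN_le (- y) qs; rewrite opprK => h'; lra.
Qed.

Lemma sublinear_odd_scalar q : sublinear q -> (forall y, q (- y) = - q y) -> scalar q.
Proof.
move=> qs qN a x y.
have qD x1 x2 : q (x1 + x2) = q x1 + q x2.
  apply/eqP; rewrite eq_le qs.1 /=.
  by have := qs.1 (x1 + x2) (- x2); rewrite addrK qN => h; lra.
have qZ c z : q (c *: z) = c * q z.
  have [c0|c0] := leP 0 c; first exact: sublinearZ.
  rewrite -[c *: z]opprK -scaleNr qN sublinearZ ?oppr_ge0 ?(ltW c0) //.
  by rewrite mulNr opprK.
by rewrite qD qZ.
Qed.

Theorem hahn_banach p : sublinear p -> exists L, scalar L /\ forall x, L x <= p x.
Proof.
move=> ps.
pose T := {q : E -> R | sublinear q /\ forall x, q x <= p x}.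
pose le_T (q1 q2 : T) := `[< forall x, sval q2 x <= sval q1 x >].
have [|||[q [qs qp]] qmax] := @ZL_preorder T (exist _ p (conj ps (fun x => lexx _))) le_T.
- by move=> q; apply/asboolP.
- move=> q1 q2 q3 /asboolP h12 /asboolP h23; apply/asboolP => x.
  exact: le_trans (h23 x) (h12 x).
- move=> A Atot.
  have [[t0 At0]|nA] := pselect (exists t : T, A t); last first.
    by exists (exist _ p (conj ps (fun x => lexx _))) => t At; case: nA; exists t.
  have Ane : sval @` A !=set0 by exists (sval t0), t0.
  have Achain q1 q2 : (sval @` A) q1 -> (sval @` A) q2 ->
      (forall x, q1 x <= q2 x) \/ (forall x, q2 x <= q1 x).
    by move=> [t1 At1 <-] [t2 At2 <-]; case: (Atot t1 t2 At1 At2) => /asboolP; auto.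
  have Asub q : (sval @` A) q -> sublinear q /\ forall x, q x <= p x.
    by move=> [t _ <-]; exact: (svalP t).
  have [gs gle] := sublinear_inf_chain Ane Achain Asub.
  set g := fun x => _ in gs gle.
  have At0' : (sval @` A) (sval t0) by exists t0.
  have gp x : g x <= p x by apply: le_trans (gle _ At0' x) ((Asub _ At0').2 x).
  by exists (exist _ g (conj gs gp)) => t At; apply/asboolP => x; apply: gle; exists t.
- exists q; split=> //; apply: sublinear_odd_scalar => //.
  apply: minimal_sublinear_odd => // q' q's q'q x.
  have q'p x' : q' x' <= p x' by apply: le_trans (q'q x') (qp x').
  by have /asboolP := qmax (exist _ q' (conj q's q'p)) (asboolT q'q); apply.
Qed.

End sublinear.

(** * Convex and lower semicontinuous extended-real functions *)

Section extended_reals.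
Context {R : realType}.
Implicit Types (x : \bar R) (r : R).

Lemma fin_num_le_EFin {x r} : x != -oo%E -> (x <= r%:E)%E -> x \is a fin_num.
Proof. by case: x. Qed.

Lemma fin_numVpinfty {x} : x != -oo%E -> x \is a fin_num \/ x = +oo%E.
Proof. by case: x => [r| |] //= _; [left|right]. Qed.

Lemma EFin_le_approx x r : (forall e, 0 < e -> ((r - e)%:E <= x)%E) -> (r%:E <= x)%E.
Proof.
case: x => [x| |] h; last by have := h 1 ltr01.
- rewrite lee_fin; apply/ler_addgt0Pr => e e0; have := h e e0; rewrite lee_fin; lra.
- exact: leey.
Qed.

Lemma convex_comb_pinfty (x y : \bar R) (t : R) :
  0 < t < 1 -> x != -oo%E -> y != -oo%E -> (x = +oo \/ y = +oo)%E ->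
  (t%:E * x + (1 - t)%:E * y = +oo)%E.
Proof.
move=> /andP[t0 t1] xNy yNy.
have scale_gtNy (c : R) (z : \bar R) : 0 < c -> z != -oo%E -> (c%:E * z != -oo)%E.
  by move=> c0; case: z => [z| |] //= _; rewrite gt0_muley.
have t'0 : 0 < 1 - t by rewrite subr_gt0.
by case=> ->; rewrite gt0_muley ?lte_fin // ?addye ?addey ?scale_gtNy.
Qed.

End extended_reals.

Definition affine {R : realType} {E : lmodType R} (phi : E -> R) :=
  forall x y t, phi (t *: x + (1 - t) *: y) = t * phi x + (1 - t) * phi y.

Lemma affineDr {R : realType} {E : lmodType R} {phi : E -> R} {c : R} :
  affine phi -> affine (fun y => phi y + c).
Proof. by move=> hphi x y t; rewrite hphi; ring. Qed.

Lemma affineN {R : realType} {E : lmodType R} {phi : E -> R} :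
  affine phi -> affine (fun y => - phi y).
Proof. by move=> hphi x y t; rewrite hphi; ring. Qed.

Definition restrict_halfspace {R : realType} {X : Type} (l : X -> R) (g : X -> \bar R) x :=
  if l x <= 0 then g x else +oo%E.

Section convex_extended.
Context {R : realType} {E : normedModType R}.
Implicit Types (K : E -> \bar R).

Lemma convex_efun_open K :
  (forall (x y : E) (t : R), 0 < t < 1 ->
     (K (t *: x + (1 - t) *: y)%R <= t%:E * K x + (1 - t)%:E * K y)%E) ->
  convex_efun K.
Proof.
move=> Kcvx x y t /andP[t0 t1].
have [->|tn0] := eqVneq t 0.
  by rewrite scale0r add0r subr0 scale1r mul0e add0e mul1e.
have [->|tn1] := eqVneq t 1.
  by rewrite subrr scale0r addr0 scale1r mul0e adde0 mul1e.
by apply: Kcvx; rewrite !lt_neqAle t0 t1 eq_sym tn0 tn1.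
Qed.

Lemma convex_efun_fin_num {K} {x y : E} {t : R} : convex_efun K -> (forall z, K z != -oo%E) ->
  0 <= t <= 1 -> K x \is a fin_num -> K y \is a fin_num ->
  K (t *: x + (1 - t) *: y) \is a fin_num /\
  fine (K (t *: x + (1 - t) *: y)) <= t * fine (K x) + (1 - t) * fine (K y).
Proof.
move=> Kcvx Kgt t01 Kx Ky.
have := Kcvx x y t t01; rewrite -(fineK Kx) -(fineK Ky) -!EFinM -EFinD => hK.
have Kt := fin_num_le_EFin (Kgt _) hK.
by split=> //; rewrite -lee_fin (fineK Kt).
Qed.

Lemma convex_restrict_halfspace (g : E -> \bar R) (l : E -> R) :
  convex_efun g -> (forall y, g y != -oo%E) -> affine l ->
  convex_efun (restrict_halfspace l g).
Proof.
move=> gcvx gNy laff; apply: convex_efun_open => x y t t01.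
have [t0 t1] := andP t01.
have rNy z : restrict_halfspace l g z != -oo%E.
  by rewrite /restrict_halfspace; case: ifP.
rewrite {1}/restrict_halfspace laff.
case: (leP (l x) 0) => lx; last first.
  by rewrite convex_comb_pinfty ?leey ?rNy //; left; rewrite /restrict_halfspace leNgt lx.
case: (leP (l y) 0) => ly; last first.
  by rewrite convex_comb_pinfty ?leey ?rNy //; right; rewrite /restrict_halfspace leNgt ly.
have -> : t * l x + (1 - t) * l y <= 0.
  by rewrite -[0]addr0 lerD // mulr_ge0_le0 // ?subr_ge0 ltW.
by rewrite /restrict_halfspace lx ly; apply: gcvx; rewrite !ltW.
Qed.

Lemma convex_efunD_affine (f : E -> \bar R) (phi : E -> R) :
  convex_efun f -> (forall y, f y != -oo%E) -> affine phi ->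
  convex_efun (fun y => f y + (phi y)%:E)%E.
Proof.
move=> fcvx fNy phiaff; apply: convex_efun_open => x y t t01.
have gNy z : (f z + (phi z)%:E != -oo)%E by move: (fNy z); case: (f z).
have [fx|fx] := fin_numVpinfty (fNy x); last first.
  by rewrite convex_comb_pinfty ?leey ?gNy //; left; rewrite fx addye.
have [fy|fy] := fin_numVpinfty (fNy y); last first.
  by rewrite convex_comb_pinfty ?leey ?gNy //; right; rewrite fy addye.
have t01' : 0 <= t <= 1 by have [t0 t1] := andP t01; rewrite !ltW.
have [fw hw] := convex_efun_fin_num fcvx fNy t01' fx fy.
rewrite phiaff -(fineK fx) -(fineK fy) -(fineK fw) -!EFinD lee_fin.
by rewrite !mulrDr; lra.
Qed.

End convex_extended.

Lemma lower_semicontinuousD_continuous {R : realType} {X : topologicalType}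
    (K : X -> \bar R) (g : X -> R) :
  lower_semicontinuous K -> continuous g ->
  lower_semicontinuous (fun y => K y + (g y)%:E)%E.
Proof.
move=> Klsc gc y a ha.
have [d d0 hd] : exists2 d, 0 < d & ((a - g y + d)%:E < K y)%E.
  move: ha; case: (K y) => [ky| |] //= => [|_]; last by exists 1 => //; exact: ltry.
  rewrite -EFinD lte_fin => h; exists ((ky + g y - a) / 2).
    by rewrite divr_gt0 // subr_gt0.
  by rewrite lte_fin; lra.
have [V1 nV1 hV1] := Klsc y _ hd.
have nV2 : \forall z \near y, g y - d < g z.
  have /cvgrPdist_lt /(_ d d0) := gc y.
  by apply: filterS => z; rewrite ltr_distlC => /andP[].
exists (V1 `&` [set z | g y - d < g z]); first exact: filterI.
move=> z [/hV1 + /= hz]; case: (K z) => [kz| |] //= h.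
  by move: h; rewrite -EFinD !lte_fin; lra.
by rewrite addye ?ltry.
Qed.

Lemma lower_semicontinuous_restrict {R : realType} {X : topologicalType}
    (l : X -> R) (g : X -> \bar R) :
  lower_semicontinuous g -> continuous l -> lower_semicontinuous (restrict_halfspace l g).
Proof.
move=> glsc lc y a; rewrite /restrict_halfspace; case: (leP (l y) 0) => ly ha.
  have [V nV hV] := glsc y a ha; exists V => // z /hV.
  by case: ifP => // _ _; exact: ltry.
exists [set z | 0 < l z].
  have /cvgrPdist_lt /(_ (l y) ly) := lc y.
  by apply: filterS => z; rewrite ltr_distlC => /andP[+ _]; rewrite subrr.
by move=> z /= lz; rewrite leNgt lz /= ltry.
Qed.

(** * Ekeland's variational principle and subgradients of small norm *)

Section ekeland.
Context {R : realType} {E : completeNormedModType R}.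
Variables (K : E -> \bar R) (rho : R).
Hypotheses (rho_gt0 : 0 < rho) (K_lsc : lower_semicontinuous K) (K_ge0 : forall y, (0 <= K y)%E).

Let below x y := (K y + (rho * `|y - x|)%:E <= K x)%E.

Let K_gtNy y : K y != -oo%E.
Proof. by apply: contraTneq (K_ge0 y) => ->. Qed.

Let below_refl x : below x x.
Proof. by rewrite /below subrr normr0 mulr0 adde0. Qed.

Let below_fin_num {x y} : K x \is a fin_num -> below x y -> K y \is a fin_num.
Proof.
move=> Kx; rewrite /below -(fineK Kx) => h; apply: (fin_num_le_EFin (K_gtNy _)).
by apply: le_trans h; rewrite leeDl // lee_fin mulr_ge0 // ltW.
Qed.

Let belowE x y : K x \is a fin_num -> K y \is a fin_num ->
  below x y = (fine (K y) + rho * `|y - x| <= fine (K x)).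
Proof. by move=> Kx Ky; rewrite /below -(fineK Kx) -(fineK Ky) -EFinD lee_fin. Qed.

Let below_trans {x y z} : K x \is a fin_num -> below x y -> below y z -> below x z.
Proof.
move=> Kx xy yz; have Ky := below_fin_num Kx xy; have Kz := below_fin_num Ky yz.
move: xy yz; rewrite !belowE // => xy yz.
have : `|z - x| <= `|z - y| + `|y - x| by apply: ler_distD.
by move/(ler_wpM2l (ltW rho_gt0)); rewrite mulrDr; lra.
Qed.

Let closed_below {x} : K x \is a fin_num -> closed (below x).
Proof.
move=> Kx; have : closed (~` [set y | (fine (K x))%:E < K y + (rho * `|y - x|)%:E]%E).
  apply: open_closedC; move: (fine (K x)); apply/lower_semicontinuousP.
  apply: lower_semicontinuousD_continuous => // y.
  apply: cvgMl_tmp; apply: cvg_norm; apply: cvgB; [exact: cvg_id | exact: cvg_cst].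
by congr closed; apply/seteqP; split=> y /=; rewrite /below fineK // leNgt => /negP.
Qed.

Let below_almost_min x {e : R} : 0 < e -> exists y, K x \is a fin_num ->
  below x y /\ forall z, below x z -> fine (K y) <= fine (K z) + e.
Proof.
move=> e0; have [Kx|] := boolP (K x \is a fin_num); last by exists x.
pose A := [set fine (K z) | z in below x].
have Ane : A !=set0 by exists (fine (K x)), x; first exact: below_refl.
have Alb : has_lbound A.
  by exists 0 => _ [z xz <-]; rewrite -lee_fin fineK // (below_fin_num Kx xz).
have [_ [y xy <-] hy] := inf_adherent e0 (conj Ane Alb).
exists y => _; split=> // z xz.
have : inf A <= fine (K z) by apply: (ge_inf Alb); exists z.
by move: hy; lra.
Qed.

(* Each term nearly minimizes [K] over the points below its predecessor, so everything
   below [u n.+1] lies within [n.+1^-1 / rho] of it. *)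
Let descent_sequence {v} : K v \is a fin_num -> exists u : nat -> E,
  [/\ u 0%N = v, forall n, K (u n) \is a fin_num,
      forall n m, (n <= m)%N -> below (u n) (u m) &
      forall n z, below (u n.+1) z -> `|z - u n.+1| <= n.+1%:R^-1 / rho].
Proof.
move=> Kv; have inv_gt0 n : 0 < n.+1%:R^-1 :> R by rewrite invr_gt0.
have [next nextP] : exists next : E -> nat -> E, forall x n, K x \is a fin_num ->
    below x (next x n) /\ forall z, below x z -> fine (K (next x n)) <= fine (K z) + n.+1%:R^-1.
  by exists (fun x n => projT1 (cid (below_almost_min x (inv_gt0 n)))) => x n; case: cid.
have [u [u0 uS]] : exists u : nat -> E, u 0%N = v /\ forall n, u n.+1 = next (u n) n.
  by exists (nat_rect (fun _ => E) v (fun n un => next un n)).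
have u_fin n : K (u n) \is a fin_num.
  by elim: n => [|n IH]; rewrite ?u0 // uS; exact: below_fin_num IH (nextP _ _ IH).1.
have u_next n : below (u n) (u n.+1) by rewrite uS; exact: (nextP _ _ (u_fin _)).1.
exists u; split=> //.
  move=> n m /subnK <-; elim: (m - n)%N => [|k IH]; first by rewrite add0n.
  by rewrite addSn; exact: below_trans (u_fin _) IH (u_next _).
move=> n z uz; have Kz := below_fin_num (u_fin _) uz.
have := (nextP (u n) n (u_fin n)).2 z (below_trans (u_fin _) (u_next n) uz).
rewrite -uS => h; suff : rho * `|z - u n.+1| <= n.+1%:R^-1 by rewrite ler_pdivlMr // mulrC.
move: uz; rewrite belowE // => uz; rewrite -(lerD2l (fine (K z))); exact: le_trans uz h.
Qed.

Theorem ekeland_variational (v : E) : K v \is a fin_num ->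
  exists s, (K s + (rho * `|s - v|)%:E <= K v)%E /\
            forall y, (K s <= K y + (rho * `|y - s|)%:E)%E.
Proof.
move=> Kv; have [u [u0 u_fin u_nested u_diam]] := descent_sequence Kv.
have small e : 0 < e -> exists n : nat, n.+1%:R^-1 / rho < e.
  move=> e0; have [N _ /(_ N (leqnn N))] :=
    near_infty_natSinv_lt (PosNum (mulr_gt0 e0 rho_gt0)).
  by rewrite /= => h; exists N; rewrite ltr_pdivrMr.
have u_cvg : cvg (u @ \oo).
  apply/cauchy_cvgP/cauchy_exP => e e0; have [n hn] := small e e0.
  exists (u n.+1), n.+1 => // m /= nm; rewrite -ball_normE /= distrC.
  exact: le_lt_trans (u_diam _ _ (u_nested _ _ nm)) hn.
set s := lim (u @ \oo).
have u_s n : below (u n) s.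
  apply: (closed_cvg (below (u n)) (closed_below (u_fin n)) _ s u_cvg).
  by exists n => // m /= /u_nested.
exists s; split; first by rewrite -u0; exact: u_s 0%N.
move=> y; rewrite leNgt; apply/negP => ys.
have sy : below s y by rewrite /below ltW.
suff y_s : y = s by move: ys; rewrite y_s subrr normr0 mulr0 adde0 ltxx.
apply/eqP; rewrite -subr_eq0 -normr_le0; apply/ler_addgt0Pr => e e0; rewrite add0r.
have [n hn] := small (e / 2) (ltac:(by rewrite divr_gt0)).
have := u_diam n y (below_trans (u_fin _) (u_s _) sy); have := u_diam n s (u_s _).
have := ler_distD (u n.+1) y s; rewrite [`|s - u n.+1|]distrC.
by move: hn; set w := _ / rho; lra.
Qed.

End ekeland.

Lemma convex_comb_rays {R : realType} {E : lmodType R} (s z1 z2 : E) (t1 t2 : R) : 0 < t1 -> 0 < t2 ->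
  (t2 / (t1 + t2)) *: (s + t1 *: z1) + (1 - t2 / (t1 + t2)) *: (s + t2 *: z2) =
  s + (t1 * t2 / (t1 + t2)) *: (z1 + z2).
Proof.
move=> t10 t20; have t12 : t1 + t2 != 0 by rewrite gt_eqF ?addr_gt0.
have -> : 1 - t2 / (t1 + t2) = t1 / (t1 + t2) by field.
rewrite !scalerDr !scalerA addrACA -scalerDl.
have -> : t2 / (t1 + t2) + t1 / (t1 + t2) = 1 by field.
by rewrite scale1r; congr (_ + (_ *: _ + _ *: _)); field.
Qed.

Section penalized_minimum.
Context {R : realType} {E : normedModType R}.
Variables (K : E -> \bar R) (s : E) (rho : R).
Hypotheses (rho_gt0 : 0 < rho) (K_cvx : convex_efun K) (K_gtNy : forall y, K y != -oo%E).
Hypotheses (Ks_fin : K s \is a fin_num)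
  (s_min : forall y, (K s <= K y + (rho * `|y - s|)%:E)%E).

(* [penal] is the infimal convolution of the directional derivative of [K] at [s] with
   [rho * `|_|]: a sublinear function squeezed between [- rho * `|_|] and the increments
   of [K] at [s], so Hahn-Banach yields a subgradient of norm at most [rho]. *)
Let slopes y := [set r : R | exists t z, 0 < t /\ K (s + t *: z) \is a fin_num /\
  r = (fine (K (s + t *: z)) - fine (K s)) / t + rho * `|y - z|].
Let penal y := inf (slopes y).

Let slopes_ex y : slopes y (rho * `|y|).
Proof.
exists 1, 0; rewrite scaler0 addr0 subrr mul0r add0r subr0.
by split=> //; split.
Qed.

Let slopes_lb y : lbound (slopes y) (- (rho * `|y|)).
Proof.
move=> _ [t [z [t0 [Kf ->]]]].
have hk := s_min (s + t *: z).
rewrite -(fineK Kf) -(fineK Ks_fin) -EFinD lee_fin addrAC subrr add0r in hk.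
rewrite normrZ gtr0_norm // in hk.
set k := fine (K (s + t *: z)) in hk *.
have hz : `|z| <= `|y| + `|y - z|.
  by have := ler_distD y z 0; rewrite !subr0 [`|z - y|]distrC addrC.
have h1 : - (rho * `|z|) <= (k - fine (K s)) / t by rewrite ler_pdivlMr //; nra.
by have := ler_wpM2l (ltW rho_gt0) hz; rewrite mulrDr => ?; lra.
Qed.

Let penal_le {y r} : slopes y r -> penal y <= r.
Proof. by move=> yr; apply: (ge_inf (ex_intro _ _ (slopes_lb y))). Qed.

Let penal_le_norm y : penal y <= rho * `|y|.
Proof. exact/penal_le/slopes_ex. Qed.

Let penal_le_increment y : K (s + y) \is a fin_num ->
  penal y <= fine (K (s + y)) - fine (K s).
Proof.
move=> Kf; apply: penal_le; exists 1, y; rewrite scale1r divr1 subrr normr0 mulr0 addr0.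
by split=> //; split.
Qed.

Let penal_sublinear : sublinear penal.
Proof.
have Pne y : slopes y !=set0 by exists (rho * `|y|).
split.
- move=> y1 y2; rewrite -lerBlDr; apply: lb_le_inf (Pne y1) _.
  move=> _ [t1 [z1 [t10 [K1f ->]]]].
  rewrite lerBlDr -lerBlDl; apply: lb_le_inf (Pne y2) _.
  move=> _ [t2 [z2 [t20 [K2f ->]]]].
  rewrite lerBlDr.
  set lam := t2 / (t1 + t2); set t := t1 * t2 / (t1 + t2).
  have t12 : 0 < t1 + t2 by rewrite addr_gt0.
  have t0 : 0 < t by rewrite divr_gt0 // mulr_gt0.
  have lam01 : 0 <= lam <= 1.
    by rewrite /lam divr_ge0 ?(ltW t20) ?(ltW t12) //= ler_pdivrMr // mul1r lerDr ltW.
  have [] := convex_efun_fin_num K_cvx K_gtNy lam01 K1f K2f.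
  rewrite convex_comb_rays // -/t => Kf hK.
  have Pt : slopes (y1 + y2) ((fine (K (s + t *: (z1 + z2))) - fine (K s)) / t +
                              rho * `|y1 + y2 - (z1 + z2)|) by exists t, (z1 + z2).
  apply: le_trans (penal_le Pt) _.
  have hn : `|y1 + y2 - (z1 + z2)| <= `|y1 - z1| + `|y2 - z2|.
    by rewrite opprD addrACA ler_normD.
  set k1 := fine (K (s + t1 *: z1)) in hK *; set k2 := fine (K (s + t2 *: z2)) in hK *.
  have hdiv : (fine (K (s + t *: (z1 + z2))) - fine (K s)) / t <=
              (k1 - fine (K s)) / t1 + (k2 - fine (K s)) / t2.
    have -> : (k1 - fine (K s)) / t1 + (k2 - fine (K s)) / t2 =
              (lam * k1 + (1 - lam) * k2 - fine (K s)) / t.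
      by rewrite /lam /t; field; rewrite !gt_eqF //; apply/andP; split.
    by rewrite ler_pM2r ?invr_gt0 // lerD2r.
  by have := ler_wpM2l (ltW rho_gt0) hn; rewrite mulrDr => ?; lra.
- move=> c y c0; rewrite mulrC -ler_pdivrMr //; apply: lb_le_inf (Pne y) _.
  move=> _ [t [z [t0 [Kf ->]]]].
  rewrite ler_pdivrMr //; apply: penal_le; exists (t / c), (c *: z).
  rewrite scalerA mulrAC -mulrA mulfV ?gt_eqF // mulr1 divr_gt0 //.
  split=> //; split=> //.
  by rewrite -scalerBr normrZ gtr0_norm //; field; rewrite !gt_eqF.
Qed.

Lemma penalized_min_subgradient : exists L, scalar L /\
  (forall y, `|L y| <= rho * `|y|) /\ forall y, (K s + (L (y - s))%:E <= K y)%E.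
Proof.
have [L [Llin Lp]] := hahn_banach _ penal_sublinear.
exists L; split=> //; split.
  move=> y; rewrite ler_norml (le_trans (Lp y) (penal_le_norm y)) andbT.
  rewrite lerNl -scalarN //; apply: le_trans (Lp _) _.
  by rewrite -[`|y|]normrN; apply: penal_le_norm.
move=> y; have [Kf|->] := fin_numVpinfty (K_gtNy y); last exact: leey.
have := penal_le_increment (y - s); rewrite addrC subrK => /(_ Kf) h.
have := le_trans (Lp (y - s)) h.
by rewrite -(fineK Kf) -(fineK Ks_fin) -EFinD lee_fin => ?; lra.
Qed.

End penalized_minimum.

(** * A multiplier rule for one affine constraint *)

Section halfspace_multiplier.
Context {R : realType} {E : normedModType R}.
Variables (f : E -> \bar R) (phi l : E -> R) (V : R).
Hypotheses (f_cvx : convex_efun f) (f_gtNy : forall y, f y != -oo%E).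
Hypotheses (phi_aff : affine phi) (l_aff : affine l).
Hypothesis slater : exists v0, l v0 < 0 /\ f v0 \is a fin_num.
Hypothesis f_ge : forall {y}, l y <= 0 -> (V%:E <= f y - (phi y)%:E)%E.

Let f_geE {y} : l y <= 0 -> f y \is a fin_num -> V <= fine (f y) - phi y.
Proof. by move=> ly fy; have := f_ge ly; rewrite -(fineK fy) -EFinB lee_fin. Qed.

(* The multiplier is the least slope of [f - phi - V] along [l] on the open halfspace. *)
Let ratios := [set (fine (f v) - phi v - V) / (- l v) | v in
  [set v | l v < 0 /\ f v \is a fin_num]].
Let mu := inf ratios.

Let ratios_ge0 : lbound ratios 0.
Proof.
move=> _ [v [lv fv] <-]; apply: divr_ge0; last by rewrite oppr_ge0 ltW.
by rewrite subr_ge0 f_geE // ltW.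
Qed.

Let ratios_neq0 : ratios !=set0.
Proof. by have [v0 hv0] := slater; exists ((fine (f v0) - phi v0 - V) / (- l v0)), v0. Qed.

Let mu_ge0 : 0 <= mu.
Proof. exact: lb_le_inf ratios_neq0 ratios_ge0. Qed.

Let mu_le {y} : l y < 0 -> f y \is a fin_num -> mu * (- l y) <= fine (f y) - phi y - V.
Proof.
move=> ly fy; rewrite -ler_pdivlMr ?oppr_gt0 //.
by apply: (ge_inf (ex_intro _ _ ratios_ge0)); exists y.
Qed.

(* Where [l y > 0], the segment to any [v] of the open halfspace crosses [l = 0]. *)
Let mu_ge {y} : 0 < l y -> f y \is a fin_num -> (V - (fine (f y) - phi y)) / l y <= mu.
Proof.
move=> ly fy; apply: lb_le_inf ratios_neq0 _.
move=> _ [v [lv fv] <-]; set p := l y; set q := - l v.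
have q0 : 0 < q by rewrite oppr_gt0.
have pq0 : 0 < p + q by rewrite addr_gt0.
pose t := q / (p + q).
have t01 : 0 <= t <= 1.
  by rewrite divr_ge0 ?(ltW q0) ?(ltW pq0) //= ler_pdivrMr // mul1r lerDr ltW.
pose w := t *: y + (1 - t) *: v.
have lw : l w = 0.
  by rewrite /w l_aff /t -[l v]opprK -/q -/p; field; rewrite gt_eqF.
have [fw hfw] := convex_efun_fin_num f_cvx f_gtNy t01 fy fv.
have lw0 : l w <= 0 by rewrite lw.
have := f_geE lw0 fw; rewrite /w phi_aff -/w.
set A := fine (f y) - phi y; set B := fine (f v) - phi v.
have -> : t * phi y + (1 - t) * phi v = t * fine (f y) + (1 - t) * fine (f v) - (t * A + (1 - t) * B).
  by rewrite /A /B; ring.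
move=> hV; have h2 : V <= t * A + (1 - t) * B by lra.
have h3 : (p + q) * V <= q * A + p * B.
  have -> : q * A + p * B = (p + q) * (t * A + (1 - t) * B) by rewrite /t; field; rewrite gt_eqF.
  by rewrite ler_pM2l.
rewrite ler_pdivrMr // mulrAC ler_pdivlMr //; nra.
Qed.

Lemma halfspace_multiplier :
  exists2 mu, 0 <= mu & forall y, (V%:E <= f y - (phi y - mu * l y)%:E)%E.
Proof.
exists mu; first exact: mu_ge0.
move=> y; have [fy|->] := fin_numVpinfty (f_gtNy y); last by rewrite addye ?leey.
rewrite -(fineK fy) -EFinB lee_fin.
have [ly|ly|ly] := ltgtP (l y) 0.
- by have := mu_le ly fy; rewrite mulrN => ?; lra.
- by have := mu_ge ly fy; rewrite ler_pdivrMr // => ?; lra.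
- by rewrite ly mulr0 subr0 f_geE ?ly.
Qed.

End halfspace_multiplier.

(** * Duals, biduals and conjugates *)

Section dual_bidual.
Context {R : realType} {E : normedModType R}.
Implicit Types (xs ys : E -> R) (b : (E -> R) -> R).

Lemma dual_scalar {xs} : is_dual xs -> scalar xs.
Proof. by case. Qed.

Lemma dual_bounded {xs} : is_dual xs -> exists2 M, 0 <= M & forall x, `|xs x| <= M * `|x|.
Proof.
move=> [_ [M hM]]; exists `|M| => // x.
by apply: le_trans (hM x) _; rewrite ler_wpM2r // ler_norm.
Qed.

Lemma dual_affine {xs} : is_dual xs -> affine xs.
Proof.
move=> hxs x y t; have hL := dual_scalar hxs.
by rewrite (scalarD hL) !(scalable_linear hL).
Qed.

Lemma dual0 : is_dual (fun _ : E => 0 : R).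
Proof. by split=> [a x y|]; [rewrite mulr0 addr0 | exists 0 => x; rewrite normr0 mul0r]. Qed.

Lemma dual_comb {xs ys} (c d : R) : is_dual xs -> is_dual ys ->
  is_dual (fun y => c * xs y + d * ys y).
Proof.
move=> hx hy; split.
  by move=> a x y; rewrite (dual_scalar hx) (dual_scalar hy); ring.
have [Mx _ hMx] := dual_bounded hx; have [My _ hMy] := dual_bounded hy.
exists (`|c| * Mx + `|d| * My) => x.
apply: le_trans (ler_normD _ _) _; rewrite !normrM mulrDl -!mulrA.
by apply: lerD; apply: ler_wpM2l.
Qed.

Lemma dualD {xs ys} : is_dual xs -> is_dual ys -> is_dual (fun y => xs y + ys y).
Proof.
move=> hx hy; have := dual_comb 1 1 hx hy.
by congr is_dual; apply: funext => y; rewrite !mul1r.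
Qed.

Lemma dualZ {xs} (c : R) : is_dual xs -> is_dual (fun y => c * xs y).
Proof.
move=> hx; have := dual_comb c 0 hx hx.
by congr is_dual; apply: funext => y; rewrite mul0r addr0.
Qed.

Lemma dualB {xs ys} : is_dual xs -> is_dual ys -> is_dual (fun y => xs y - ys y).
Proof.
move=> hx hy; have := dual_comb 1 (-1) hx hy.
by congr is_dual; apply: funext => y; rewrite mul1r mulN1r.
Qed.

Section bidual.
Variable b : (E -> R) -> R.
Hypothesis hb : is_bidual b.

Lemma bidual0 : b (fun=> 0) = 0.
Proof.
have := hb.1 1 _ _ dual0 dual0.
have -> : (fun _ : E => 1 * 0 + 0 : R) = (fun=> 0) by apply: funext => _; rewrite mulr0 addr0.
by rewrite mul1r => ?; lra.
Qed.

Lemma bidualZ {xs} (c : R) : is_dual xs -> b (fun y => c * xs y) = c * b xs.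
Proof.
move=> hx; have := hb.1 c _ _ hx dual0; rewrite bidual0 addr0 => <-.
by congr b; apply: funext => y; rewrite addr0.
Qed.

Lemma bidualD {xs ys} : is_dual xs -> is_dual ys -> b (fun y => xs y + ys y) = b xs + b ys.
Proof.
move=> hx hy; have := hb.1 1 _ _ hx hy; rewrite mul1r => <-.
by congr b; apply: funext => y; rewrite mul1r.
Qed.

Lemma bidualB {xs ys} : is_dual xs -> is_dual ys -> b (fun y => xs y - ys y) = b xs - b ys.
Proof.
move=> hx hy; have := hb.1 (-1) _ _ hy hx; rewrite mulN1r addrC => <-.
by congr b; apply: funext => y; rewrite mulN1r addrC.
Qed.

Lemma bidual_bounded : exists2 M, 0 <= M & forall xs (r : R), is_dual xs -> 0 < r ->
  (forall y, `|xs y| <= r * `|y|) -> `|b xs| <= r * M.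
Proof.
have [_ [M hM]] := hb; exists `|M| => // xs r hx r0 hxr.
have := hM _ (dualZ r^-1 hx); rewrite bidualZ // normrM gtr0_norm ?invr_gt0 //.
rewrite ler_pdivrMl // => h.
apply: le_trans (h _) _; last by rewrite ler_pM2l // ler_norm.
by move=> y; rewrite normrM gtr0_norm ?invr_gt0 // ler_pdivrMl.
Qed.

End bidual.
End dual_bidual.

Lemma dual_continuous {R : realType} {E : normedModType R} (xs : E -> R) :
  is_dual xs -> continuous xs.
Proof.
move=> hx x; have [M M0 hM] := dual_bounded hx.
have M1 : 0 < M + 1 by rewrite ltr_wpDl.
apply/cvgrPdist_lt => e e0; near=> z.
rewrite -(zmod_morphism_linear (dual_scalar hx)); apply: le_lt_trans (hM _) _.
apply: (@le_lt_trans _ _ ((M + 1) * `|x - z|)); first by rewrite ler_wpM2r // lerDl.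
rewrite -ltr_pdivlMl //; near: z; apply: cvgr_dist_lt; first exact: cvg_id.
by rewrite mulr_gt0 ?invr_gt0.
Unshelve. all: by end_near. Qed.

Section conjugates.
Context {R : realType} {E : normedModType R}.
Implicit Types (f : E -> \bar R) (xs a : E -> R) (b : (E -> R) -> R).
Local Open Scope ereal_scope.

Lemma fconj_ge f xs x : (xs x)%:E - f x <= fconj f xs.
Proof. by apply: ereal_sup_ubound; exists x. Qed.

Lemma fconj_le f xs M : (forall x, (xs x)%:E - f x <= M) -> fconj f xs <= M.
Proof. by move=> h; apply: ge_ereal_sup => _ [x _ <-]. Qed.

Lemma fbiconj_ge f b {xs} : is_dual xs -> (b xs)%:E - fconj f xs <= fbiconj f b.
Proof. by move=> hx; apply: ereal_sup_ubound; exists xs. Qed.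

Lemma fbiconj_le f b M : (forall xs, is_dual xs -> (b xs)%:E - fconj f xs <= M) ->
  fbiconj f b <= M.
Proof. by move=> h; apply: ge_ereal_sup => _ [xs hx <-]; apply: h. Qed.

Lemma fconj_gtNy {f} xs : proper_fun f -> fconj f xs != -oo.
Proof.
move=> [fn [x0 fx0]]; have fin0 : f x0 \is a fin_num by rewrite fin_numE fn.
by have := fconj_ge f xs x0; rewrite -(fineK fin0) -EFinB; case: (fconj f xs).
Qed.

Lemma fconj_EFin_ge {f xs m x} : fconj f xs = m%:E -> f x \is a fin_num ->
  (xs x - fine (f x) <= m)%R.
Proof. by move=> fm fx; have := fconj_ge f xs x; rewrite fm -(fineK fx) -EFinB lee_fin. Qed.

Lemma fconj_subgradient f s ss : f s \is a fin_num -> is_dual ss ->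
  (forall y, f s + (ss (y - s))%:E <= f y) -> fconj f ss = (ss s - fine (f s))%:E.
Proof.
move=> fs hss hsub; apply/eqP; rewrite eq_le; apply/andP; split.
  apply: fconj_le => y; have := hsub y.
  rewrite (zmod_morphism_linear (dual_scalar hss)) -(fineK fs) -EFinD.
  case: (f y) => [fy| |] //=; last by rewrite addeNy leNye.
  by rewrite lee_fin -EFinB lee_fin => ?; lra.
by have := fconj_ge f ss s; rewrite -(fineK fs) -EFinB.
Qed.

Lemma subdiff_graph_fin_num {f s ss} : subdiff_graph f s ss ->
  f s \is a fin_num /\ fconj f ss \is a fin_num.
Proof.
move=> [_ he]; have : f s + fconj f ss \is a fin_num by rewrite he.
by rewrite fin_numD => /andP.
Qed.

Lemma fitz_subdiff_le {f x} xs : f x \is a fin_num -> fconj f xs \is a fin_num ->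
  fitz (subdiff_graph f) x xs <= (fine (f x) + fine (fconj f xs))%:E.
Proof.
move=> fx fc; apply: ge_ereal_sup => _ [[s ss] /= hG <-].
have [fs fss] := subdiff_graph_fin_num hG.
have e1 : (fine (f s) + fine (fconj f ss) = ss s)%R.
  by have [_] := hG; rewrite -(fineK fs) -(fineK fss) -EFinD => -[].
have := fconj_EFin_ge (esym (fineK fss)) fx; have := fconj_EFin_ge (esym (fineK fc)) fs.
by rewrite lee_fin; lra.
Qed.

Lemma fitz_conj_subdiff_ge {f} a b {x xs} : is_dual xs ->
  f x \is a fin_num -> fconj f xs \is a fin_num ->
  (a x - fine (f x) + b xs - fine (fconj f xs))%:E <= fitz_conj (subdiff_graph f) a b.
Proof.
move=> hx fx fc; apply: le_trans (ereal_sup_ubound _); last by exists (x, xs).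
have := fitz_subdiff_le xs fx fc.
case: (fitz _ x xs) => [F| |] //= hF; last by rewrite addey ?leey.
by rewrite -EFinB lee_fin; move: hF; rewrite lee_fin; lra.
Qed.

End conjugates.

(** * The Fitzpatrick extension of the subdifferential *)

Section approximate_kkt.
Context {R : realType} {E : completeNormedModType R}.
Variables (f : E -> \bar R) (a a' : E -> R) (c m : R).
Hypotheses (f_gtNy : forall y, f y != -oo%E) (f_cvx : convex_efun f)
  (f_lsc : lower_semicontinuous f).
Hypotheses (ha : is_dual a) (ha' : is_dual a') (fa_m : fconj f a = m%:E).
Hypothesis slater : exists v0, a' v0 + c < 0 /\ f v0 \is a fin_num.

Let l y := a' y + c.
Let K := restrict_halfspace l (fun y => f y + (- a y + m)%:E)%E.

Let K_ge0 y : (0 <= K y)%E.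
Proof.
rewrite /K /restrict_halfspace; case: ifP => _; last exact: leey.
have [fy|->] := fin_numVpinfty (f_gtNy y); last by rewrite addye.
by rewrite -(fineK fy) -EFinD lee_fin; have := fconj_EFin_ge fa_m fy; lra.
Qed.

Let K_gtNy y : K y != -oo%E.
Proof. by apply: contraTneq (K_ge0 y) => ->. Qed.

Let K_lsc : lower_semicontinuous K.
Proof.
apply: lower_semicontinuous_restrict.
  apply: lower_semicontinuousD_continuous => // y.
  by apply: cvgD; [apply: cvgN; exact: dual_continuous | exact: cvg_cst].
by move=> y; apply: cvgD; [exact: dual_continuous | exact: cvg_cst].
Qed.

Let K_cvx : convex_efun K.
Proof.
apply: convex_restrict_halfspace; last exact: affineDr (dual_affine ha').
  exact/convex_efunD_affine/affineDr/affineN/dual_affine.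
by move=> y; move: (f_gtNy y); case: (f y).
Qed.

Let K_fin_num {y} : K y \is a fin_num -> l y <= 0 /\ f y \is a fin_num.
Proof.
rewrite /K /restrict_halfspace; case: ifP => // ly.
by rewrite fin_numD => /andP[].
Qed.

Let fine_K {y} : l y <= 0 -> f y \is a fin_num -> K y = (fine (f y) + (- a y + m))%:E.
Proof. by move=> ly fy; rewrite /K /restrict_halfspace ly -(fineK fy). Qed.

Lemma approximate_kkt v rho : 0 < rho -> a' v + c <= 0 -> f v \is a fin_num ->
  exists s z nu, [/\ rho * `|s - v| <= m - (a v - fine (f v)), a' s + c <= 0,
    0 <= nu, nu * (a' s + c) = 0 &
    [/\ is_dual z, forall y, `|z y| <= rho * `|y| &
        subdiff_graph f s (fun y => a y + z y - nu * a' y)]].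
Proof.
move=> rho0 lv fv; have Kv := fine_K lv fv.
have [s [Ksv s_min]] := ekeland_variational _ _ rho0 K_lsc K_ge0 v (ltac:(by rewrite Kv)).
have Ks : K s \is a fin_num.
  apply: (@fin_num_le_EFin _ _ (fine (f v) + (- a v + m)) (K_gtNy s)); rewrite -Kv.
  by apply: le_trans Ksv; rewrite leeDl // lee_fin mulr_ge0 // ltW.
have [ls fs] := K_fin_num Ks.
have [z [zlin [zb z_sub]]] := penalized_min_subgradient _ _ _ rho0 K_cvx K_gtNy Ks s_min.
have hz : is_dual z by split => //; exists rho.
pose V := fine (f s) - (a s + z s).
have V_le y : l y <= 0 -> (V%:E <= f y - (a y + z y)%:E)%E.
  move=> ly; have [fy|->] := fin_numVpinfty (f_gtNy y); last by rewrite addye ?leey.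
  have := z_sub y; rewrite (fine_K ls fs) (fine_K ly fy) -(fineK fy) -!EFinB -EFinD !lee_fin.
  by rewrite (zmod_morphism_linear zlin) /V => ?; lra.
have [nu nu0 hnu] := halfspace_multiplier _ _ _ _ f_cvx f_gtNy
  (dual_affine (dualD ha hz)) (affineDr (dual_affine ha')) slater V_le.
have nu_ls : nu * l s = 0.
  apply/eqP; rewrite eq_le mulr_ge0_le0 //=.
  by have := hnu s; rewrite -(fineK fs) -EFinB lee_fin /V /l => ?; lra.
have hsv : rho * `|s - v| <= m - (a v - fine (f v)).
  move: Ksv; rewrite Kv (fine_K ls fs) -EFinD lee_fin => ?.
  have : 0 <= fine (f s) + (- a s + m) by rewrite -lee_fin -(fine_K ls fs).
  by lra.
pose ss y := a y + z y - nu * a' y.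
have hss : is_dual ss := dualB (dualD ha hz) (dualZ nu ha').
have ss_sub y : (f s + (ss (y - s))%:E <= f y)%E.
  have [fy|->] := fin_numVpinfty (f_gtNy y); last exact: leey.
  have := hnu y; move: nu_ls.
  rewrite -(fineK fy) -(fineK fs) -EFinB -EFinD !lee_fin /V /l.
  by rewrite (zmod_morphism_linear (dual_scalar hss)) /ss => ? ?; lra.
exists s, z, nu; split=> //; split=> //; split; rewrite -/ss //.
by rewrite (fconj_subgradient _ _ _ fs hss ss_sub) -(fineK fs) -EFinD; congr EFin; rewrite /ss /=; ring.
Qed.

End approximate_kkt.

Section fitz_subdiff_approx.
Context {R : realType} {E : completeNormedModType R}.
Variables (f : E -> \bar R) (a : E -> R) (b : (E -> R) -> R) (m : R).
Hypotheses (f_proper : proper_fun f) (f_cvx : convex_efun f) (f_lsc : lower_semicontinuous f).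
Hypotheses (ha : is_dual a) (hb : is_bidual b) (fa_m : fconj f a = m%:E).
Hypothesis fconj_ge_bidual : forall {w}, is_dual w -> ((m + b w - b a)%:E <= fconj f w)%E.
Variables (x : E) (xs : E -> R) (eps : R).
Hypotheses (hxs : is_dual xs) (eps_gt0 : 0 < eps).

(* On the halfspace [a' y + c <= 0], i.e. [(a - xs) (y - x) <= beta], a near-maximizer
   of [a - f] yields, via Ekeland and a multiplier [nu], a subgradient [a + z - nu a'] at
   which the Fitzpatrick sum at [(x, xs)] is within [eps] of [a x + b xs - b a]. *)
Let a' y := a y - xs y.
Let e := eps / 2.
Let beta := b a' - a' x + e.
Let c := - a' x - beta.

Let f_gtNy y : f y != -oo%E := f_proper.1 y.
Let ha' : is_dual a' := dualB ha hxs.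
Let ba' : b a' = b a - b xs := bidualB _ hb ha hxs.
Let e_gt0 : 0 < e. Proof. by rewrite divr_gt0. Qed.
Let cE : c = - b a' - e. Proof. by rewrite /c /beta; ring. Qed.

Let slater : exists v0, a' v0 + c < 0 /\ f v0 \is a fin_num.
Proof.
apply: contrapT => nslater.
have : (fconj f xs <= (m - b a + b xs - e)%:E)%E.
  apply: fconj_le => y; have [fy|->] := fin_numVpinfty (f_gtNy y); last by rewrite addeNy leNye.
  have ly : 0 <= a' y + c by rewrite leNgt; apply/negP => ly; apply: nslater; exists y.
  by rewrite -(fineK fy) -EFinB lee_fin; move: ly (fconj_EFin_ge fa_m fy); rewrite cE ba' /a'; lra.
by move/(le_trans (fconj_ge_bidual hxs)); rewrite lee_fin; have := e_gt0; lra.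
Qed.

Let near_max {eta} : 0 < eta ->
  exists v, [/\ a' v + c <= 0, f v \is a fin_num & m - eta < a v - fine (f v)].
Proof.
move=> eta0; apply: contrapT => nmax.
have V_le y : a' y + c <= 0 -> ((eta - m)%:E <= f y - (a y)%:E)%E.
  move=> ly; have [fy|->] := fin_numVpinfty (f_gtNy y); last by rewrite addye ?leey.
  rewrite -(fineK fy) -EFinB lee_fin leNgt; apply/negP => h.
  by apply: nmax; exists y; split=> //; lra.
have [mu mu0 hmu] := halfspace_multiplier _ _ _ _ f_cvx f_gtNy
  (dual_affine ha) (affineDr (dual_affine ha')) slater V_le.
pose w y := a y - mu * a' y.
have hw : is_dual w := dualB ha (dualZ mu ha').
have : (fconj f w <= (m - eta + mu * c)%:E)%E.
  apply: fconj_le => y; have [fy|->] := fin_numVpinfty (f_gtNy y); last by rewrite addeNy leNye.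
  by have := hmu y; rewrite -(fineK fy) -!EFinB !lee_fin /w => ?; lra.
have bw : b w = b a - mu * b a'.
  by rewrite /w (bidualB _ hb ha (dualZ mu ha')) (bidualZ _ hb _ ha').
move/(le_trans (fconj_ge_bidual hw)); rewrite lee_fin bw cE.
by have := mulr_ge0 mu0 (ltW e_gt0); lra.
Qed.

Let kkt_multiplier_le {s z nu} : is_dual z -> nu * (a' s + c) = 0 ->
  subdiff_graph f s (fun y => a y + z y - nu * a' y) -> nu * e <= z s - b z.
Proof.
move=> hz nu_ls hG; have [fs fc] := subdiff_graph_fin_num hG.
have bss : b (fun y => a y + z y - nu * a' y) = b a + b z - nu * b a'.
  rewrite (bidualB _ hb (dualD ha hz) (dualZ nu ha')) (bidualD _ hb ha hz).
  by rewrite (bidualZ _ hb _ ha').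
have := hG.2; rewrite -(fineK fs) -(fineK fc) -EFinD => -[] /= hsum.
have := fconj_ge_bidual hG.1; rewrite -(fineK fc) lee_fin bss.
by move: nu_ls (fconj_EFin_ge fa_m fs); rewrite cE; lra.
Qed.

Let kkt_gapE s z nu : is_dual z -> nu * (a' s + c) = 0 ->
  (a x + z x - nu * a' x) + xs s - (a s + z s - nu * a' s) =
  a x + b xs - b a - e + z (x - s) + nu * beta - (a' s + c).
Proof.
move=> hz; rewrite (zmod_morphism_linear (dual_scalar hz)) /c /beta ba' /a'.
by move=> nu_ls; lra.
Qed.

Let small_kkt_point {eta} : 0 < eta -> exists s z nu,
  [/\ subdiff_graph f s (fun y => a y + z y - nu * a' y), a' s + c <= 0,
      0 <= nu & nu * (a' s + c) = 0] /\
  [/\ is_dual z, forall y, `|z y| <= eta * `|y|, z s <= 2 * eta & - z (x - s) <= 3 * eta].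
Proof.
move=> eta_gt0; have [v [lv fv hv]] := near_max eta_gt0.
pose lam := `|v| + `|x| + 1.
have lam_ge1 : 1 <= lam by rewrite lerDr addr_ge0.
have lam_gt0 : 0 < lam := lt_le_trans ltr01 lam_ge1.
pose rho := eta / lam.
have rho_gt0 : 0 < rho by rewrite divr_gt0.
have rho_lam : rho * lam = eta by rewrite /rho mulfVK // gt_eqF.
have rho_le : rho <= eta by rewrite /rho ler_pdivrMr // ler_peMr // ltW.
have [s [z [nu [hsv ls nu0 nu_ls [hz zb hG]]]]] :=
  approximate_kkt _ _ _ _ _ f_gtNy f_cvx f_lsc ha ha' fa_m slater v rho rho_gt0 lv fv.
have rho_v : rho * `|v| <= eta by rewrite -rho_lam ler_pM2l // /lam -addrA lerDl.
have rho_x : rho * `|x| <= eta by rewrite -rho_lam ler_pM2l // /lam addrAC lerDr addr_ge0.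
have rho_s : rho * `|s| <= 2 * eta.
  have := ler_wpM2l (ltW rho_gt0) (ler_normD (s - v) v); rewrite subrK mulrDr.
  by move: hsv hv rho_v; lra.
exists s, z, nu; split=> //; split=> // [y||].
- by apply: le_trans (zb y) _; rewrite ler_wpM2r.
- by apply: le_trans (ler_norm _) (le_trans (zb s) rho_s).
- apply: le_trans (ler_normlW _) (le_trans (zb _) _); first by rewrite normrN.
  by have := ler_wpM2l (ltW rho_gt0) (ler_normB x s); rewrite mulrDr; lra.
Qed.

Lemma fitz_subdiff_approx : exists s ss,
  subdiff_graph f s ss /\ a x + b xs - b a - eps <= ss x + xs s - ss s.
Proof.
have [Mb Mb0 hMb] := bidual_bounded _ hb.
(* [eta] is small enough that [3 eta + eta (2 + Mb) `|beta| / e <= e]. *)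
pose D := (2 + Mb) * (`|beta| + 1) / e + 3.
have D_gt0 : 0 < D by rewrite ltr_wpDl // !mulr_ge0 ?invr_ge0 ?addr_ge0 ?(ltW e_gt0).
pose eta := e / D.
have eta_gt0 : 0 < eta by rewrite divr_gt0.
have [s [z [nu [[hG ls nu0 nu_ls] [hz zb zs zxs]]]]] := small_kkt_point eta_gt0.
exists s, (fun y => a y + z y - nu * a' y); split=> //.
rewrite kkt_gapE //; have nu_e := kkt_multiplier_le hz nu_ls hG.
have bz : - b z <= eta * Mb.
  by apply: le_trans (ler_normlW _) (hMb z eta hz eta_gt0 zb); rewrite normrN.
have nu_beta : - (nu * beta) <= e - 3 * eta.
  have nu_le : nu <= eta * (2 + Mb) / e by rewrite ler_pdivlMr //; lra.
  have : - (nu * beta) <= nu * (`|beta| + 1).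
    rewrite -mulrN; apply: (ler_wpM2l nu0).
    by have := ler_norm (- beta); rewrite normrN => ?; lra.
  move/le_trans; apply; apply: le_trans (ler_wpM2r _ nu_le) _; first by rewrite addr_ge0.
  have -> : e - 3 * eta = eta * (D - 3) by rewrite /eta mulrBr mulrC divfK ?gt_eqF // mulrC.
  by rewrite /D addrK mulrAC -!mulrA.
by move: ls zxs nu_beta; rewrite /e; lra.
Qed.

End fitz_subdiff_approx.

Section fitz_ext_subdiff.
Context {R : realType} {E : normedModType R}.
Variables (f : E -> \bar R) (a : E -> R) (b : (E -> R) -> R).
Hypotheses (f_proper : proper_fun f) (ha : is_dual a).
Local Open Scope ereal_scope.

Let f_gtNy y : f y != -oo := f_proper.1 y.

(* With an empty graph the Fitzpatrick function is [-oo], so its conjugate is [+oo]. *)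
Lemma fitz_ext_subdiff_graph_neq0 : fitz_ext_graph (subdiff_graph f) a b ->
  exists s ss, subdiff_graph f s ss.
Proof.
move=> hF; apply: contrapT => hne.
have fitz0 : fitz (subdiff_graph f) 0%R a = -oo.
  apply/eqP; rewrite eq_le leNye andbT; apply: ge_ereal_sup => _ [[s ss] /= hG <-].
  by case: hne; exists s, ss.
have : (a 0%R + b a)%:E - fitz (subdiff_graph f) 0%R a <= fitz_conj (subdiff_graph f) a b.
  by apply: ereal_sup_ubound; exists (0%R, a).
by rewrite hF fitz0 /= addey.
Qed.

Lemma fitz_ext_subdiff_fconj : fitz_ext_graph (subdiff_graph f) a b ->
  fconj f a + fbiconj f b = (b a)%:E.
Proof.
move=> hF; have [s [ss hG]] := fitz_ext_subdiff_graph_neq0 hF.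
have [_ fss] := subdiff_graph_fin_num hG.
have fa_le xs : is_dual xs -> fconj f xs \is a fin_num ->
    fconj f a <= (b a - b xs + fine (fconj f xs))%:E.
  move=> hxs fc; apply: fconj_le => x.
  have [fx|->] := fin_numVpinfty (f_gtNy x); last by rewrite addeNy leNye.
  have := fitz_conj_subdiff_ge a b hxs fx fc; rewrite hF.
  by rewrite -(fineK fx) -EFinB !lee_fin => ?; lra.
have fa_fin : fconj f a \is a fin_num.
  exact: (fin_num_le_EFin (fconj_gtNy a f_proper)) (fa_le _ hG.1 fss).
suff -> : fbiconj f b = (b a - fine (fconj f a))%:E.
  by rewrite -(fineK fa_fin) -EFinD; congr EFin; ring.
apply/eqP; rewrite eq_le; apply/andP; split.
  apply: fbiconj_le => xs hxs.
  have [fc|->] := fin_numVpinfty (fconj_gtNy xs f_proper); last by rewrite addeNy leNye.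
  have := fa_le xs hxs fc; rewrite -(fineK fa_fin) -(fineK fc) -EFinB !lee_fin => ?.
  by lra.
by have := fbiconj_ge f b ha; rewrite -(fineK fa_fin) -EFinB.
Qed.

Lemma fitz_conj_subdiff_ge_fconj : fconj f a \is a fin_num -> fbiconj f b \is a fin_num ->
  (fine (fconj f a) + fine (fbiconj f b))%:E <= fitz_conj (subdiff_graph f) a b.
Proof.
move=> fa_fin fb_fin; apply: EFin_le_approx => e e0.
have e20 : (0 < e / 2)%R by rewrite divr_gt0.
have /ereal_sup_gt[_ [x _ <-] hx] : (fine (fconj f a) - e / 2)%:E < fconj f a.
  by rewrite -{2}(fineK fa_fin) lte_fin ltrBlDr ltrDl.
have fx : f x \is a fin_num.
  by have [//|fx] := fin_numVpinfty (f_gtNy x); move: hx; rewrite fx addeNy.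
have /ereal_sup_gt[_ [xs hxs <-] hxs'] : (fine (fbiconj f b) - e / 2)%:E < fbiconj f b.
  by rewrite -{2}(fineK fb_fin) lte_fin ltrBlDr ltrDl.
have fc : fconj f xs \is a fin_num.
  by have [//|fc] := fin_numVpinfty (fconj_gtNy xs f_proper); move: hxs'; rewrite fc addeNy.
apply: le_trans (fitz_conj_subdiff_ge a b hxs fx fc).
move: hx hxs'; rewrite -(fineK fx) -(fineK fc) -!EFinB !lte_fin lee_fin => ? ?.
by lra.
Qed.

End fitz_ext_subdiff.

Lemma fconj_subdiff_fitz_ext {R : realType} {E : completeNormedModType R}
    (f : E -> \bar R) (a : E -> R) (b : (E -> R) -> R) :
  proper_fun f -> convex_efun f -> lower_semicontinuous f ->
  is_dual a -> is_bidual b -> (fconj f a + fbiconj f b = (b a)%:E)%E ->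
  fitz_ext_graph (subdiff_graph f) a b.
Proof.
move=> f_proper f_cvx f_lsc ha hb hab.
have : (fconj f a + fbiconj f b)%E \is a fin_num by rewrite hab.
rewrite fin_numD => /andP[fa_fin fb_fin].
have sum_ab : fine (fconj f a) + fine (fbiconj f b) = b a.
  by move: hab; rewrite -(fineK fa_fin) -(fineK fb_fin) -EFinD => -[].
have fconj_ge_bidual w : is_dual w ->
    ((fine (fconj f a) + b w - b a)%:E <= fconj f w)%E.
  move=> hw; have [fc|->] := fin_numVpinfty (fconj_gtNy w f_proper); last exact: leey.
  have := fbiconj_ge f b hw; rewrite -(fineK fb_fin) -(fineK fc) -EFinB !lee_fin.
  by lra.
apply/eqP; rewrite eq_le -{2}sum_ab fitz_conj_subdiff_ge_fconj // andbT.
apply: ge_ereal_sup => _ [[x xs] /= hxs <-].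
have : ((a x + b xs - b a)%:E <= fitz (subdiff_graph f) x xs)%E.
  apply: EFin_le_approx => eps eps0.
  have [s [ss [hG hss]]] := fitz_subdiff_approx _ _ _ _ f_proper f_cvx f_lsc ha hb
    (esym (fineK fa_fin)) fconj_ge_bidual x xs eps hxs eps0.
  apply: le_trans (ereal_sup_ubound _); last by exists (s, ss).
  by rewrite lee_fin.
case: (fitz _ x xs) => [F| |] //=; last by rewrite addeNy leNye.
by rewrite -EFinB !lee_fin => ?; lra.
Qed.

Theorem theorem3p7 (R : realType) (E : completeNormedModType R)
    (f : E -> \bar R) :
  (exists x : E, x != 0) ->
  proper_fun f -> convex_efun f -> lower_semicontinuous f ->
  forall (ys : E -> R) (yss : (E -> R) -> R),
    is_dual ys -> is_bidual yss ->
    (fitz_ext_graph (subdiff_graph f) ys yss <->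
     (fconj f ys + fbiconj f yss = (yss ys)%:E)%E).
Proof.
move=> _ f_proper f_cvx f_lsc ys yss hys hyss; split.
  exact: fitz_ext_subdiff_fconj.
exact: fconj_subdiff_fitz_ext.
Qed.
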